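(* Let $Y,W$ be metric spaces, $\psi\colon Y\to W$ continuous, $\rho\colon Y\to[0,\infty]$ Borel, and $\gamma\colon[0,1]\to Y$ an absolutely continuous path with $\int_\gamma\rho\,ds<\infty$. Suppose $E\subset Y$ is compact with $\mathcal{H}^1_W(\psi(E))=0$ and that $\ell(\psi\circ\gamma|_I)\le\int_{\gamma|_I}\rho\,ds$ for every closed interval $I\subset[0,1]\setminus\gamma^{-1}(E)$. Then $\ell(\psi\circ\gamma)\le\int_\gamma\rho\,ds$.
   Context: $\ell$ denotes the length of a path (supremum over partitions of sums of distances). The metric speed of a path $\gamma$ is $v_\gamma(t)=\lim_{s\to t}d(\gamma(s),\gamma(t))/|s-t|$ where it exists. A rectifiable path $\gamma\colon[a,b]\to Y$ is absolutely continuous if $v_\gamma\in L^1$ and $d(\gamma(t),\gamma(s))\le\int_s^tv_\gamma$ for $s\le t$. For absolutely continuous $\gamma$ and Borel $\rho\ge0$, $\int_\gamma\rho\,ds=\int_a^b(\rho\circ\gamma)v_\gamma\,dt$. $\mathcal{H}^1_W$ is the 1-dimensional Hausdorff measure on $W$. *)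

From HB Require Import structures.
From mathcomp Require Import all_boot all_order all_algebra.
From mathcomp Require Import all_classical all_reals all_analysis.
From mathcomp Require Import measurable_realfun.
Set Implicit Arguments.
Unset Strict Implicit.
Unset Printing Implicit Defensive.
Import Order.TTheory GRing.Theory Num.Theory.
Import numFieldNormedType.Exports.
Local Open Scope classical_set_scope.
Local Open Scope ring_scope.

Section Defs.
Context {R : realType}.

Definition path_length {Y : metricType R} (f : R -> Y) (a b : R) : \bar R :=
  ereal_sup [set x : \bar R | exists (n : nat) (t : nat -> R),
              [/\ t 0%N = a, t n = b,
                  (forall i, (i < n)%N -> t i <= t i.+1) &
                  x = (\sum_(0 <= i < n) mdist (f (t i)) (f (t i.+1)))%:E]].

Definition speed_filter (a b t : R) : set_system R :=
  within [set s | a <= s <= b /\ s != t] (nbhs t).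

Definition speed_quot {Y : metricType R} (f : R -> Y) (t : R) : R -> R :=
  fun s => mdist (f s) (f t) / `|s - t|.

Definition speed {Y : metricType R} (f : R -> Y) (a b t : R) : R :=
  lim (speed_quot f t @ speed_filter a b t).

Definition speed_exists {Y : metricType R} (f : R -> Y) (a b t : R) : Prop :=
  exists l : R, speed_quot f t @ speed_filter a b t --> l.

Definition abs_cont {Y : metricType R} (f : R -> Y) (a b : R) : Prop :=
  [/\ a <= b,
      {within `[a, b], continuous f},
      (path_length f a b < +oo)%E,
      {ae (@lebesgue_measure R), forall t, a <= t <= b -> speed_exists f a b t} &
      (@lebesgue_measure R).-integrable `[a, b] (fun t => (speed f a b t)%:E) /\
      forall s t, a <= s -> s <= t -> t <= b ->
        ((mdist (f s) (f t))%:E <=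
          \int[@lebesgue_measure R]_(u in `[s, t]) (speed f a b u)%:E)%E].

Definition line_int {Y : metricType R} (rho : Y -> \bar R) (f : R -> Y)
    (a b : R) : \bar R :=
  (\int[@lebesgue_measure R]_(t in `[a, b]) (rho (f t) * (speed f a b t)%:E))%E.

Definition borel_fun {Y : topologicalType} (rho : Y -> \bar R) : Prop :=
  forall B : set (\bar R), measurable B -> <<s (@open Y) >> (rho @^-1` B).

Definition diam {W : metricType R} (C : set W) : \bar R :=
  ereal_sup ([set 0%E] `|` [set (mdist x y)%:E | x in C & y in C]).

Definition hausdorff1_delta {W : metricType R} (A : set W) (delta : R) : \bar R :=
  ereal_inf [set (\sum_(0 <= n <oo) diam (C n))%E | C in
             [set C : nat -> set W | A `<=` \bigcup_n C n /\
                                     forall n, (diam (C n) <= delta%:E)%E]].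

Definition hausdorff1 {W : metricType R} (A : set W) : \bar R :=
  ereal_sup [set hausdorff1_delta A delta | delta in [set d : R | 0 < d]].

End Defs.

From HB Require Import structures.
From mathcomp Require Import all_boot all_order all_algebra.
From mathcomp Require Import all_classical all_reals all_analysis.
From mathcomp Require Import measurable_realfun.
From mathcomp Require Import ring lra.
Import Order.TTheory GRing.Theory Num.Theory.
Import numFieldNormedType.Exports.
Local Open Scope classical_set_scope.
Local Open Scope ring_scope.

(* Write f := psi \o gamma and F s t := \int_{gamma|[s,t]} rho ds, which is
   superadditive in the interval; since the length of f is a supremum of sums of
   distances, it suffices to show d(f s, f t) <= F s t.  Fix eps > 0.  The compact
   H^1-null set psi(E) is covered by finitely many open sets U_n of diameters w_n
   with sum w_n <= eps, and d(f s, f t) <= F s t + sum w_n follows by induction on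
   the number of sets: before the first time c at which gamma meets E the
   hypothesis applies; f c lies in some U_n, and from the last time e at which f
   is in U_n on, the remaining sets cover f([e, t]) \cap psi(E). *)

Section continuous_within.
Context {R : realType} {Y : metricType R}.
Implicit Types (g : R -> Y) (A : set R).

Lemma continuous_within_mdist {g A x} {e : R} : {within A, continuous g} ->
  A x -> 0 < e ->
  exists2 d : R, 0 < d & forall y, A y -> `|y - x| < d -> mdist (g x) (g y) < e.
Proof.
move=> gc Ax e0.
have /(gc x) /= /(nbhs_subspace_ex _ Ax) [V /nbhs_ballP [d d0 dV] UV] :
  nbhs (g x) (ball (g x) e) by apply: nbhsx_ballx.
exists d => // y Ay yd.
have : (g @^-1` ball (g x) e `&` A) y.
  by rewrite UV; split => //; apply: dV; rewrite /ball /= distrC.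
by case; rewrite /= ballEmdist.
Qed.

Lemma continuous_within_open {g A} {O : set Y} {x} : {within A, continuous g} ->
  A x -> open O -> O (g x) ->
  exists2 d : R, 0 < d & forall y, A y -> `|y - x| < d -> O (g y).
Proof.
move=> gc Ax oO Ogx.
have /nbhs_ballP [e e0 eO] : nbhs (g x) O by apply: open_nbhs_nbhs.
have [d d0 Hd] := continuous_within_mdist gc Ax e0.
by exists d => // y Ay yx; apply: eO; rewrite ballEmdist /=; apply: Hd.
Qed.

Lemma closed_within_preimage g A (B : set Y) : closed A ->
  {within A, continuous g} -> closed B -> closed (A `&` g @^-1` B).
Proof.
move=> cA gc cB x clx.
have Ax : A x.
  by rewrite (closure_id A).1 //; apply: closureS clx; apply: subIsetl.
split => //; rewrite (closure_id B).1 // => V /nbhs_ballP [e e0 eV].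
have [d d0 Hd] := continuous_within_mdist gc Ax e0.
have [u [[Au Bgu] /= xu]] := clx _ (nbhsx_ballx x d d0).
exists (g u); split => //; apply: eV; rewrite ballEmdist /=.
by apply: Hd => //; rewrite distrC.
Qed.

Lemma measurable_within_preimage_open g A (O : set Y) : measurable A ->
  {within A, continuous g} -> open O -> measurable (A `&` g @^-1` O).
Proof.
move=> mA gc oO.
pose V := [set u | exists2 d : R, 0 < d & forall y, A y -> `|y - u| < d -> O (g y)].
have oV : open V.
  rewrite openE => u [d d0 Hd]; apply/nbhs_ballP; exists (d / 2) => /=.
    by rewrite divr_gt0.
  move=> z; rewrite /ball /= => uz; exists (d / 2); first by rewrite divr_gt0.
  move=> y Ay yz; apply: Hd => //.
  by rewrite (le_lt_trans (ler_distD z y u))// [d]splitr ltrD// distrC.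
suff -> : A `&` g @^-1` O = A `&` V by apply: measurableI => //; apply: open_measurable.
apply/seteqP; split => u [Au].
  by move=> Ogu; split => //; exact: continuous_within_open.
by move=> [d d0 Hd]; split => //; apply: Hd => //; rewrite subrr normr0.
Qed.

Lemma measurable_within_preimage_borel g A (B : set Y) : measurable A ->
  {within A, continuous g} -> <<s open >> B -> measurable (A `&` g @^-1` B).
Proof.
move=> mA gc; apply: (smallest_sub (X := [set B | measurable (A `&` g @^-1` B)]));
  last by move=> O; apply: measurable_within_preimage_open.
split => /=.
- by rewrite preimage_set0 setI0.
- move=> C mC; suff -> : A `&` g @^-1` (setT `\` C) = A `\` (A `&` g @^-1` C).
    exact: measurableD.
  apply/seteqP; split => u /= [Au H]; split => //; first by case: H => _ nC [].
  by split => // ?; apply: H.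
- by move=> C mC; rewrite preimage_bigcup setI_bigcupr; apply: bigcup_measurable.
Qed.

End continuous_within.

Lemma closed_inf (R : realType) (A : set R) :
  A !=set0 -> has_lbound A -> closed A -> A (inf A).
Proof.
move=> A0 lA cA; apply: itv_closed_infimums => //; split; first by move=> x; apply: ge_inf.
by move=> x; apply: lb_le_inf.
Qed.

Section metric_speed.
Context {R : realType} {Y : metricType R}.
Implicit Types (f : R -> Y) (a b s t u : R).

Lemma speed_filter_proper a b u : a < b -> a <= u <= b ->
  ProperFilter (speed_filter a b u).
Proof.
move=> ab /andP[au ub]; apply: within_nbhs_proper => B /nbhs_ballP [e /= e0 eB].
have [ub'|bu] := ltP u b.
  pose m := Num.min (e / 2) (b - u).
  have m0 : 0 < m by rewrite lt_min divr_gt0 // subr_gt0.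
  have me : m < e by rewrite gt_min; apply/orP; left; lra.
  have mbu : m <= b - u by rewrite ge_min lexx orbT.
  clearbody m.
  exists (u + m); split.
    by split; [apply/andP; split; lra | rewrite gt_eqF // ltrDl].
  by apply: eB; rewrite /ball /= opprD addrA subrr add0r normrN gtr0_norm.
pose m := Num.min (e / 2) (b - a).
have m0 : 0 < m by rewrite lt_min divr_gt0 // subr_gt0.
have me : m < e by rewrite gt_min; apply/orP; left; lra.
have mba : m <= b - a by rewrite ge_min lexx orbT.
clearbody m.
exists (u - m); split.
  by split; [apply/andP; split; lra | rewrite lt_eqF // gtrBl].
by apply: eB; rewrite /ball /= opprB addrC subrK gtr0_norm.
Qed.

Lemma speed_ge0 f a b u : a < b -> a <= u <= b -> 0 <= speed f a b u.
Proof.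
move=> ab hu; have PF := @speed_filter_proper a b u ab hu.
rewrite /speed; have [[l fl]|nocvg] := pselect (speed_exists f a b u).
  rewrite (cvg_lim _ fl) //; apply: (closed_cvg (fun x : R => 0 <= x) _ _ _ fl).
    exact: closed_ge.
  by apply: nearW => s; rewrite /speed_quot divr_ge0 // mdist_ge0.
rewrite /lim /lim_in getPN // => l fl; apply: nocvg; exists l; exact: fl.
Qed.

Lemma speed_sub f {a b c d x} : a <= c -> d <= b -> c < x < d ->
  speed f c d x = speed f a b x.
Proof.
move=> ac db /andP[cx xd]; rewrite /speed /speed_filter /within.
have r0 : 0 < Num.min (x - c) (d - x) by rewrite lt_min !subr_gt0 cx xd.
suff same_near : forall y, `|x - y| < Num.min (x - c) (d - x) ->
    (c <= y <= d /\ y != x) <-> (a <= y <= b /\ y != x).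
  congr lim; congr fmap; apply/funext => P; apply/propext.
  by split; apply: filterS2 (nbhsx_ballx x _ r0) => y /= /same_near E H /E.
move=> y; rewrite lt_min !ltr_distlC => /andP[/andP[y1 _] /andP[_ y2]].
by split => -[/andP[l1 l2] yx]; split => //; apply/andP; split; lra.
Qed.

Lemma mdist_le_path_length f s t : s <= t ->
  ((mdist (f s) (f t))%:E <= path_length f s t)%E.
Proof.
move=> st; apply: ereal_sup_ubound.
exists 1%N, (fun i => if i == 0%N then s else t); split => //.
  by case.
by rewrite big_nat1.
Qed.

Section superadditive.
Variables (a b : R) (F : R -> R -> \bar R).
Hypothesis F_ge0 : forall s t, a <= s -> s <= t -> t <= b -> (0 <= F s t)%E.
Hypothesis F_super : forall s x y t, a <= s -> s <= x -> x <= y -> y <= t ->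
  t <= b -> (F s x + F y t <= F s t)%E.

Lemma path_length_le_superadditive f :
  (forall s t, a <= s -> s <= t -> t <= b -> ((mdist (f s) (f t))%:E <= F s t)%E) ->
  (path_length f a b <= F a b)%E.
Proof.
move=> fF; apply: ge_ereal_sup => _ [n [t [t0 tn t_nd ->]]].
have t_mono i j : (i <= j <= n)%N -> t i <= t j.
  move=> /andP[+ jn]; elim: j jn => [|j IH] jn; first by rewrite leqn0 => /eqP ->.
  rewrite leq_eqVlt ltnS => /predU1P[-> //|ij].
  exact: le_trans (IH (ltnW jn) ij) (t_nd _ jn).
have t_in i : (i <= n)%N -> a <= t i /\ t i <= b.
  by move=> iN; rewrite -t0 -tn; split; apply: t_mono; rewrite ?leq0n iN ?leqnn.
suff : forall k, (k <= n)%N ->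
    ((\sum_(0 <= i < k) mdist (f (t i)) (f (t i.+1)))%:E <= F a (t k))%E.
  by move=> /(_ n (leqnn n)); rewrite tn.
elim => [|k IH] kn.
  by rewrite big_geq // t0; apply: F_ge0 => //; case: (t_in _ (leqnn n)); rewrite tn.
have [ak kb] := t_in k (ltnW kn); have [ak1 k1b] := t_in k.+1 kn.
rewrite big_nat_recr //= EFinD.
apply: le_trans _ (F_super _ _ _ _ (lexx a) ak (lexx _) (t_nd k kn) k1b).
by apply: leeD; [exact: IH (ltnW kn) | exact: fF _ _ ak (t_nd k kn) k1b].
Qed.

End superadditive.
End metric_speed.

Lemma ge0_integral_itv_split_le (R : realType) (h : R -> \bar R) (s x y t : R) :
  s <= x -> x <= y -> y <= t ->
  measurable_fun `[s, t] h -> (forall u, s <= u <= t -> (0 <= h u)%E) ->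
  (\int[lebesgue_measure]_(u in `[s, x]) h u + \int[lebesgue_measure]_(u in `[y, t]) h u
    <= \int[lebesgue_measure]_(u in `[s, t]) h u)%E.
Proof.
move=> sx xy yt mh h0.
have sub : `[s, x[ `|` `[y, t] `<=` `[s, t].
  by move=> u /= [|]; rewrite !in_itv /= => /andP[su ut]; apply/andP; split; lra.
rewrite -integral_itv_bndo_bndc; last first.
  by apply: measurable_funS mh => // u /=; rewrite !in_itv /= => /andP[su ux]; lra.
rewrite -ge0_integral_setU //.
- by apply: ge0_subset_integral => //; apply: measurableU.
- exact: measurable_funS mh.
- by move=> u /sub; rewrite /= in_itv /=; apply: h0.
- rewrite disj_set2E; apply/eqP/seteqP; split => u //= [].
  by rewrite !in_itv /= => /andP[_ ux] /andP[yu _]; lra.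
Qed.

Section hausdorff_null_cover.
Context {R : realType} {W : metricType R}.

Lemma diam_ge0 (C : set W) : (0 <= diam C)%E.
Proof. by apply: ereal_sup_ubound; left. Qed.

Lemma mdist_le_diam (C : set W) x y : C x -> C y -> ((mdist x y)%:E <= diam C)%E.
Proof. by move=> Cx Cy; apply: ereal_sup_ubound; right; exists x => //; exists y. Qed.

Lemma sum_geometric_eps (eps : R) (M : nat) :
  \sum_(0 <= n < M) 2 * (eps / 2 ^+ n.+3) = eps / 2 - eps / 2 ^+ M.+1.
Proof.
elim: M => [|M IH]; first by rewrite big_geq // expr1 subrr.
rewrite big_nat_recr //= IH !exprS.
have : (2 : R) ^+ M != 0 by rewrite expf_neq0 // pnatr_eq0.
by move=> ?; field.
Qed.

(* Thicken a countable cover C of small total diameter into open sets of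
   diameter at most diam (C n) + 2 eps / 2^(n+3), then keep finitely many. *)
Lemma hausdorff1_eq0_open_cover (A : set W) (eps : R) : compact A ->
  hausdorff1 A = 0%E -> 0 < eps ->
  exists (U : nat -> set W) (w : nat -> R) (M : nat),
  [/\ forall n, open (U n), forall n, 0 <= w n,
      forall n y z, U n y -> U n z -> mdist y z <= w n,
      forall x, A x -> exists2 n, (n < M)%N & U n x &
      \sum_(0 <= n < M) w n <= eps].
Proof.
move=> cA A0 e0.
have : (hausdorff1_delta A 1 < (eps / 2)%:E)%E.
  apply: le_lt_trans (_ : _ <= 0)%E _; last by rewrite lte_fin divr_gt0.
  by rewrite -A0; apply: ereal_sup_ubound; exists 1 => /=.
move=> /ereal_inf_lt [_ [C [Ccov Cdiam] <-] Clt].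
pose eta n : R := eps / 2 ^+ n.+3.
have eta0 n : 0 < eta n by rewrite divr_gt0 // exprn_gt0.
have dfin n : diam (C n) \is a fin_num.
  by rewrite ge0_fin_numE ?diam_ge0 //; apply: le_lt_trans (Cdiam n) (ltry _).
pose U n := [set y | exists2 x, C n x & mdist x y < eta n].
pose w n := fine (diam (C n)) + 2 * eta n.
have Uo n : open (U n).
  rewrite openE => y [x Cx xy]; apply/nbhs_ballP.
  exists (eta n - mdist x y); first by rewrite /= subr_gt0.
  move=> z; rewrite ballEmdist /= => yz; exists x => //.
  by have := metric_triangle x y z; lra.
have w0 n : 0 <= w n.
  rewrite addr_ge0 //; last by rewrite mulr_ge0 // ltW.
  by rewrite -lee_fin fineK // diam_ge0.
have Uw n y z : U n y -> U n z -> mdist y z <= w n.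
  move=> [x Cx xy] [x' Cx' x'z].
  have : mdist x x' <= fine (diam (C n)) by rewrite -lee_fin fineK // mdist_le_diam.
  have := metric_triangle y x z; have := metric_triangle x x' z.
  by rewrite (metric_sym y x) /w; lra.
have [M HM] : exists M : nat, forall x, A x -> exists2 n, (n < M)%N & U n x.
  have cover_near x : A x ->
      \forall x' \near x & i \near \oo, exists2 n, (n < i)%N & U n x'.
    move=> /Ccov [n _ Cnx].
    exists (U n, [set M | (n < M)%N]); first split => /=.
    - by apply: open_nbhs_nbhs; split => //; exists x => //; rewrite mdistxx.
    - by exists n.+1.
    by move=> [y M] [/= Uy nM]; exists n.
  have [N _ HN] := (compact_near_coveringP A).1 cA _ eventually
    (fun (M : nat) y => exists2 n, (n < M)%N & U n y) _ cover_near.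
  by exists N => x Ax; apply: (HN N (leqnn N)).
exists U, w, M; split => //.
rewrite big_split /= [eps]splitr; apply: lerD.
  rewrite -lee_fin -sumEFin; under eq_bigr do rewrite fineK //.
  apply: le_trans (ltW Clt).
  exact: nneseries_lim_ge (fun n _ _ => diam_ge0 (C n)).
by rewrite sum_geometric_eps lerBlDr lerDl divr_ge0 ?exprn_ge0 // ltW.
Qed.

End hausdorff_null_cover.

Section null_image_covering.
Context {R : realType} {W : metricType R}.
Variables (a b : R) (f : R -> W) (K : set R) (F : R -> R -> \bar R).
Hypothesis f_cont : {within `[a, b], continuous f}.
Hypothesis K_closed : closed K.
Hypothesis F_ge0 : forall s t, a <= s -> s <= t -> t <= b -> (0 <= F s t)%E.
Hypothesis F_super : forall s x y t, a <= s -> s <= x -> x <= y -> y <= t ->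
  t <= b -> (F s x + F y t <= F s t)%E.
Hypothesis F_off_K : forall s t, a <= s -> s <= t -> t <= b ->
  (forall u, s <= u <= t -> ~ K u) -> ((mdist (f s) (f t))%:E <= F s t)%E.

Let in_ab {x} : a <= x -> x <= b -> `[a, b]%classic x.
Proof. by move=> ax xb; rewrite /= in_itv /= ax xb. Qed.

Lemma first_hit s t : (exists u, s <= u <= t /\ K u) ->
  exists c, [/\ s <= c <= t, K c & forall u, s <= u < c -> ~ K u].
Proof.
move=> [u0 [u0st Ku0]]; pose S := `[s, t] `&` K.
have lS : has_lbound S by exists s => u []; rewrite /= in_itv => /andP[].
have [] : S (inf S).
  apply: closed_inf => //; first by exists u0; split => //; rewrite /= in_itv.
  by apply: closedI => //; apply: itv_closed.
rewrite /= in_itv /= => /andP[sc ct] Kc; exists (inf S); split => //; first by apply/andP.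
move=> u /andP[su uc] Ku; have ut : u <= t by lra.
by have := ge_inf lS (conj (introT andP (conj su ut) : `[s, t]%classic u) Ku); lra.
Qed.

Lemma mdist_le_F_before_hit s c (V : set W) : a <= s -> s <= c -> c <= b ->
  (forall u, s <= u < c -> ~ K u) -> open V -> V (f c) ->
  exists2 x, s <= x <= c & V (f x) /\ ((mdist (f s) (f x))%:E <= F s x)%E.
Proof.
move=> as_ sc cb Kfree oV Vc.
have [d d0 Vnear] := continuous_within_open f_cont (in_ab (le_trans as_ sc) cb) oV Vc.
pose x := Num.max s (c - d / 2).
have sx : s <= x by rewrite le_max lexx.
have xc : x <= c by rewrite ge_max sc /=; lra.
have cdx : c - d / 2 <= x by rewrite le_max lexx orbT.
have xc' : s < c -> x < c by move=> sc'; rewrite gt_max sc' /=; lra.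
clearbody x; exists x; first by apply/andP.
split; first by apply: Vnear; [apply: in_ab; lra | rewrite ler0_norm ?subr_le0 //; lra].
have [sc'|cs] := ltP s c; last first.
  have -> : x = s by apply: le_anti; rewrite sx andbT (le_trans xc cs).
  by rewrite mdistxx; apply: F_ge0 => //; lra.
have := xc' sc' => {}xc'.
apply: F_off_K => //; first lra.
by move=> u /andP[su ux]; apply: Kfree; apply/andP; split; lra.
Qed.

Lemma mdist_le_at_sup (T : set R) (y : W) (r : R) : T !=set0 -> T `<=` `[a, b] ->
  (forall u, T u -> mdist y (f u) <= r) -> mdist y (f (sup T)) <= r.
Proof.
move=> [u0 Tu0] Tab Tr.
have uT : has_sup T.
  by split; [exists u0 | exists b => u /Tab; rewrite /= in_itv => /andP[]].
have abT : `[a, b]%classic (sup T).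
  have /= := Tab _ Tu0; rewrite !in_itv /= => /andP[au0 u0b].
  rewrite ge_sup ?andbT; [exact: le_trans au0 (sup_upper_bound uT Tu0)|by exists u0|].
  by move=> u /Tab; rewrite /= in_itv => /andP[].
rewrite leNgt; apply/negP => rlt.
have e0 : 0 < mdist y (f (sup T)) - r by rewrite subr_gt0.
have [d d0 near_sup] := continuous_within_mdist f_cont abT e0.
have [u Tu du] := sup_adherent d0 uT.
have ud : `|u - sup T| < d by rewrite ler0_norm ?subr_le0 ?sup_upper_bound //; lra.
have := near_sup _ (Tab _ Tu) ud; have := Tr _ Tu.
by have := metric_triangle y (f u) (f (sup T)); rewrite (metric_sym (f u)); lra.
Qed.

Lemma open_sup_exit (V : set W) s t : open V -> a <= s -> t <= b ->
  (exists u, s <= u <= t /\ V (f u)) ->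
  let e := sup [set u | s <= u <= t /\ V (f u)] in
  e < t -> forall u, e <= u <= t -> ~ V (f u).
Proof.
move=> oV as_ tb [u0 Tu0] e et u /andP[eu ut] Vu.
have uT : has_sup [set u | s <= u <= t /\ V (f u)].
  by split; [exists u0 | exists t => ? [/andP[]]].
have Te : forall v, s <= v <= t /\ V (f v) -> v <= e := sup_upper_bound uT.
have se : s <= e by case: (Tu0) => /andP[su0 _] _; exact: le_trans su0 (Te _ Tu0).
have Tu : s <= u <= t /\ V (f u) by split => //; apply/andP; split; lra.
have ue : u = e by apply: le_anti; rewrite eu andbT; exact: Te.
have u_ab := in_ab (le_trans as_ (le_trans se eu)) (le_trans ut tb).
have [d d0 Vnear] := continuous_within_open f_cont u_ab oV Vu.
pose x := Num.min t (u + d / 2).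
have ux : u < x by rewrite lt_min; apply/andP; split; lra.
have xt : x <= t by rewrite ge_min lexx.
have xud : x <= u + d / 2 by rewrite ge_min lexx orbT.
clearbody x.
have Tx : s <= x <= t /\ V (f x).
  split; first by apply/andP; split; lra.
  by apply: Vnear; [apply: in_ab; lra | rewrite gtr0_norm ?subr_gt0 //; lra].
by have := Te _ Tx; lra.
Qed.

Section finite_cover.
Variables (U : nat -> set W) (w : nat -> R).
Hypothesis U_open : forall n, open (U n).
Hypothesis w_ge0 : forall n, 0 <= w n.
Hypothesis U_diam : forall n y z, U n y -> U n z -> mdist y z <= w n.

Definition covers (l : seq nat) s t :=
  forall u, s <= u <= t -> K u -> exists2 n, n \in l & U n (f u).

Lemma mdist_le_F_cover l s t : a <= s -> s <= t -> t <= b -> covers l s t ->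
  ((mdist (f s) (f t))%:E <= F s t + (\sum_(n <- l) w n)%:E)%E.
Proof.
have sum_ge0 l' : (0 <= (\sum_(n <- l') w n)%:E)%E by rewrite lee_fin sumr_ge0.
elim: (size l).+1 {-2}l (ltnSn (size l)) s t => // k IH {}l lk s t as_ st tb cov.
have [hit|nohit] := pselect (exists u, s <= u <= t /\ K u); last first.
  apply: le_trans (leeDl _ (sum_ge0 l)).
  by apply: F_off_K => // u ust Ku; apply: nohit; exists u.
have [c [/andP[sc ct] Kc Kfree]] := first_hit _ _ hit.
have [n nl Unc] := cov c (introT andP (conj sc ct)) Kc.
have [x /andP[sx xc] [Unx sx_le]] :=
  mdist_le_F_before_hit _ _ _ as_ sc (le_trans ct tb) Kfree (U_open n) Unc.
have T_ne : exists u, s <= u <= t /\ U n (f u) by exists c; split => //; apply/andP.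
pose e := sup [set u | s <= u <= t /\ U n (f u)].
have [ce et] : c <= e /\ e <= t.
  have uT : has_sup [set u | s <= u <= t /\ U n (f u)].
    by split => //; exists t => ? [/andP[]].
  split; first by apply: sup_upper_bound => //; split => //; apply/andP.
  by apply: ge_sup => //; move=> ? [/andP[]].
have xe_le : mdist (f x) (f e) <= w n.
  rewrite /e; apply: mdist_le_at_sup; first by exists c; split => //; apply/andP.
    by move=> u [/andP[su ut] _]; apply: in_ab; lra.
  by move=> u [_ Unu]; apply: U_diam.
have et_le : ((mdist (f e) (f t))%:E <= F e t + (\sum_(m <- rem n l) w m)%:E)%E.
  have [et'|te] := ltP e t; last first.
    have -> : e = t by apply: le_anti; rewrite et.
    by rewrite mdistxx adde_ge0 // F_ge0 //; lra.
  apply: IH => //; try lra.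
    rewrite size_rem // -ltnS prednK // lt0n size_eq0.
    by apply: contraTneq nl => ->.
  move=> u /andP[eu ut] Ku.
  have [m ml Umu] := cov u (introT andP (conj (le_trans (le_trans sc ce) eu) ut)) Ku.
  exists m => //; move: ml; rewrite (perm_mem (perm_to_rem nl)) inE => /predU1P[mn|//].
  rewrite mn in Umu.
  by case: (open_sup_exit _ _ _ (U_open n) as_ tb T_ne et' u (introT andP (conj eu ut))
    Umu).
rewrite (big_rem n) //= EFinD.
apply: le_trans (_ : _ <= (mdist (f s) (f x))%:E + ((w n)%:E + (mdist (f e) (f t))%:E))%E _.
  rewrite -!EFinD lee_fin.
  have := metric_triangle (f s) (f x) (f t); have := metric_triangle (f x) (f e) (f t).
  lra.
apply: le_trans (leeD sx_le (leeD (lexx _) et_le)) _.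
rewrite addeA addeACA; apply: leeD => //.
by apply: F_super => //; lra.
Qed.

End finite_cover.

Lemma mdist_le_F_of_null_image (C : set W) : compact C -> hausdorff1 C = 0%E ->
  (forall u, K u -> C (f u)) -> forall s t, a <= s -> s <= t -> t <= b ->
  ((mdist (f s) (f t))%:E <= F s t)%E.
Proof.
move=> cC C0 KC s t as_ st tb; apply/lee_addgt0Pr => eps e0.
have [U [w [M [U_open w_ge0 U_diam UC wM]]]] := hausdorff1_eq0_open_cover _ _ cC C0 e0.
apply: le_trans
  (@mdist_le_F_cover U w U_open w_ge0 U_diam (index_iota 0 M) s t as_ st tb _) _.
  by move=> u _ /KC /UC [n nM Un]; exists n; rewrite ?mem_index_iota.
by apply: leeD; rewrite ?lee_fin.
Qed.

End null_image_covering.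

Section line_integral.
Context {R : realType} {Y : metricType R}.
Variables (rho : Y -> \bar R) (gamma : R -> Y).
Hypothesis rho_ge0 : forall y, (0 <= rho y)%E.
Hypothesis rho_borel : borel_fun rho.
Hypothesis gamma_ac : abs_cont gamma 0 1.

Let h u := (rho (gamma u) * (speed gamma 0 1 u)%:E)%E.

Lemma line_int_integrand_measurable : measurable_fun `[(0 : R), 1] h.
Proof.
apply: emeasurable_funM; last by case: gamma_ac => _ _ _ _ [/measurable_int].
move=> _ B mB; apply: (measurable_within_preimage_borel gamma _ (rho @^-1` B)) => //.
  by case: gamma_ac.
exact: rho_borel.
Qed.

Lemma line_int_integrand_ge0 u : 0 <= u <= 1 -> (0 <= h u)%E.
Proof. by move=> u01; rewrite mule_ge0 // lee_fin speed_ge0. Qed.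

Lemma line_int_sub c d : 0 <= c -> c <= d -> d <= 1 ->
  line_int rho gamma c d = (\int[lebesgue_measure]_(u in `[c, d]) h u)%E.
Proof.
move=> c0 cd d1.
have mh : measurable_fun `]c, d[ h.
  apply: measurable_funS line_int_integrand_measurable => // u /=.
  by rewrite !in_itv /= => /andP[cu ud]; apply/andP; split; lra.
have h_eq : {in `]c, d[, h =1 (fun u => rho (gamma u) * (speed gamma c d u)%:E)%E}.
  by move=> u; rewrite in_itv /= => cud; rewrite /h (speed_sub gamma c0 d1 cud).
rewrite /line_int integral_itv_bndoo; last first.
  by apply: (eq_measurable_fun h) => // u; rewrite inE /= => cud; apply: h_eq; rewrite inE.
rewrite [RHS]integral_itv_bndoo //; apply: eq_integral => u; rewrite inE /= => cud.
by rewrite h_eq // inE.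
Qed.

Lemma line_int_split_le s x y t : 0 <= s -> s <= x -> x <= y -> y <= t -> t <= 1 ->
  (line_int rho gamma s x + line_int rho gamma y t <= line_int rho gamma s t)%E.
Proof.
move=> s0 sx xy yt t1.
have [x1 y0 st] : [/\ x <= 1, 0 <= y & s <= t] by split; lra.
rewrite !line_int_sub //.
apply: ge0_integral_itv_split_le => //.
  apply: measurable_funS line_int_integrand_measurable => // u /=.
  by rewrite !in_itv /= => /andP[su ut]; apply/andP; split; lra.
by move=> u /andP[su ut]; apply: line_int_integrand_ge0; apply/andP; split; lra.
Qed.

Lemma line_int_ge0 s t : 0 <= s -> s <= t -> t <= 1 -> (0 <= line_int rho gamma s t)%E.
Proof.
move=> s0 st t1; rewrite line_int_sub //; apply: integral_ge0 => u /=.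
by rewrite in_itv /= => /andP[su ut]; apply: line_int_integrand_ge0; apply/andP; split; lra.
Qed.

End line_integral.

Theorem lemma2p2 (R : realType) (Y W : metricType R) (psi : Y -> W)
    (rho : Y -> \bar R) (gamma : R -> Y) (E : set Y) :
  continuous psi ->
  (forall y, 0 <= rho y)%E ->
  borel_fun rho ->
  abs_cont gamma 0 1 ->
  (line_int rho gamma 0 1 < +oo)%E ->
  compact E ->
  hausdorff1 (psi @` E) = 0%E ->
  (forall c d : R, 0 <= c -> c <= d -> d <= 1 ->
     (forall t, c <= t <= d -> ~ E (gamma t)) ->
     (path_length (psi \o gamma) c d <= line_int rho gamma c d)%E) ->
  (path_length (psi \o gamma) 0 1 <= line_int rho gamma 0 1)%E.
Proof.
move=> psi_cont rho_ge0 rho_borel gamma_ac _ E_compact E_null off_E.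
have gamma_cont : {within `[0, 1], continuous gamma} by case: gamma_ac.
have K_closed : closed (`[0, 1] `&` gamma @^-1` E).
  apply: closed_within_preimage => //; first exact: itv_closed.
  exact: compact_closed (@metric_hausdorff R Y) E_compact.
have psiE_compact : compact (psi @` E).
  by apply: continuous_compact => //; apply: continuous_subspaceT.
have F_ge0 := line_int_ge0 _ _ rho_ge0 rho_borel gamma_ac.
have F_super := line_int_split_le _ _ rho_ge0 rho_borel gamma_ac.
apply: (path_length_le_superadditive _ _ _ F_ge0 F_super).
apply: (mdist_le_F_of_null_image _ _ _ _ _ _ K_closed F_ge0 F_super _ _
  psiE_compact E_null).
- by apply: within_continuous_comp => // y _; apply: psi_cont.
- move=> s t s0 st t1 offK; apply: le_trans (off_E _ _ s0 st t1 _).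
    exact: mdist_le_path_length.
  by move=> u sut Eu; apply: (offK u sut); split => //; rewrite /= in_itv /=; lra.
- by move=> u [_ Eu]; exists (gamma u).
Qed.
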